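(* Assume the setting described in the context, assume $L>1$, let $\xi=(\xi_1,\dots,\xi_{\ell_L})\in\mathbb R^{\ell_L}$, for $i,j\in\mathbb N_0$, $k\in\mathbb N$ let $\alpha_{i,j,k}=i\ell_{k-1}+j+\sum_{h=1}^{k-1}\ell_h(\ell_{h-1}+1)$, and let $\theta=(\theta_1,\dots,\theta_{\mathfrak d})$, $\vartheta=(\vartheta_1,\dots,\vartheta_{\mathfrak d})\in\mathbb R^{\mathfrak d}$ satisfy for all $i\in\{1,\dots,\ell_L\}$ and all $j\in\{1,\dots,\mathfrak d\}\setminus\big(\bigcup_{k=1}^{\ell_L}\{\alpha_{\ell_{L-1},1,L-1},\alpha_{0,1,L},\alpha_{\ell_L,k,L}\}\big)$ that $\theta_{\alpha_{\ell_{L-1},1,L-1}}=\vartheta_{\alpha_{0,1,L}}=1$, $\theta_{\alpha_{\ell_L,i,L}}=\vartheta_{\alpha_{\ell_L,i,L}}=\xi_i$, and $\theta_{\alpha_{0,1,L}}=\vartheta_{\alpha_{\ell_{L-1},1,L-1}}=\theta_j=\vartheta_j=0$. Then $\mathcal L_\infty(\theta)=\mathcal L_\infty(\vartheta)$ and $$\mathcal L_\infty\Big(\frac{\theta+\vartheta}2\Big)=\Big[\frac{\mathcal L_\infty(\theta)+\mathcal L_\infty(\vartheta)}2\Big]+\frac{\mathfrak m}{16}+\frac12\Big[\xi_1\mathfrak m-\int_{[a,b]^{\ell_0}}f_1(x)\,\mu(dx)\Big].$$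
   Context: Setting. Let $L,\mathfrak d\in\mathbb N=\{1,2,\dots\}$, $(\ell_k)_{k\in\mathbb N_0}\subseteq\mathbb N$, $a\in\mathbb R$, $b\in(a,\infty)$ with $\mathfrak d=\sum_{k=1}^L\ell_k(\ell_{k-1}+1)$; let $\mathbf d_k=\sum_{h=1}^k\ell_h(\ell_{h-1}+1)$ for $k\in\mathbb N_0$. For $\theta=(\theta_1,\dots,\theta_{\mathfrak d})\in\mathbb R^{\mathfrak d}$, $k\in\{1,\dots,L\}$, $i\in\{1,\dots,\ell_k\}$, $j\in\{1,\dots,\ell_{k-1}\}$ let $\mathfrak w^{k,\theta}_{i,j}=\theta_{(i-1)\ell_{k-1}+j+\mathbf d_{k-1}}$ and $\mathfrak b^{k,\theta}_i=\theta_{\ell_k\ell_{k-1}+i+\mathbf d_{k-1}}$, let $\mathfrak w^{k,\theta}=(\mathfrak w^{k,\theta}_{i,j})_{i,j}\in\mathbb R^{\ell_k\times\ell_{k-1}}$, $\mathfrak b^{k,\theta}=(\mathfrak b^{k,\theta}_1,\dots,\mathfrak b^{k,\theta}_{\ell_k})\in\mathbb R^{\ell_k}$, and $\mathcal A^\theta_k(x)=\mathfrak b^{k,\theta}+\mathfrak w^{k,\theta}x$. Let $\mathfrak M_\infty(x_1,\dots,x_n)=(\max\{x_1,0\},\dots,\max\{x_n,0\})$ and $\|\cdot\|$ the Euclidean norm. Define $\mathcal N^{k,\theta}_\infty\colon\mathbb R^{\ell_0}\to\mathbb R^{\ell_k}$, $k\in\{1,\dots,L\}$, by $\mathcal N^{1,\theta}_\infty=\mathcal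 A^\theta_1$ and $\mathcal N^{k+1,\theta}_\infty(x)=\mathcal A^\theta_{k+1}(\mathfrak M_\infty(\mathcal N^{k,\theta}_\infty(x)))$. Let $\mu$ be a measure on the Borel $\sigma$-algebra of $[a,b]^{\ell_0}$ with $\mathfrak m=\mu([a,b]^{\ell_0})\in\mathbb R$, let $f=(f_1,\dots,f_{\ell_L})\colon[a,b]^{\ell_0}\to\mathbb R^{\ell_L}$ be measurable, and let $\mathcal L_\infty\colon\mathbb R^{\mathfrak d}\to\mathbb R$, $\mathcal L_\infty(\theta)=\int_{[a,b]^{\ell_0}}\|\mathcal N^{L,\theta}_\infty(x)-f(x)\|^2\,\mu(dx)$ (these integrals are real numbers as part of the setting). *)

From HB Require Import structures.
From mathcomp Require Import all_boot all_order all_algebra.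
From mathcomp Require Import all_classical all_reals all_analysis.
Unset Printing Implicit Defensive.
Import Order.TTheory GRing.Theory Num.Theory.
Local Open Scope ring_scope.

Section ANN.
Variable R : realType.
Variable l : nat -> nat.   (* layer widths l_0, l_1, ... *)

Definition dsum (k : nat) : nat := (\sum_(1 <= h < k.+1) l h * (l h.-1 + 1))%N.

Definition alpha (i j k : nat) : nat := (i * l k.-1 + j + dsum k.-1)%N.

(* 1-based coordinate theta_k of theta in R^n (0 outside {1,...,n}) *)
Definition pcoord {n : nat} (th : 'rV[R]_n) (k : nat) : R :=
  if k is k'.+1 then oapp (fun i : 'I_n => th 0 i) 0 (insub k') else 0.

Variable dd : nat.

(* weight matrix w^{k,theta} and bias vector b^{k,theta}; i0, j0 are 0-based,
   so the paper's i = i0+1, j = j0+1 *)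
Definition wmat (th : 'rV[R]_dd) (k : nat) : 'M[R]_(l k, l k.-1) :=
  \matrix_(i0 < l k, j0 < l k.-1) pcoord th ((i0.+1 - 1) * l k.-1 + j0.+1 + dsum k.-1)%N.
Definition bvec (th : 'rV[R]_dd) (k : nat) : 'cV[R]_(l k) :=
  \col_(i0 < l k) pcoord th (l k * l k.-1 + i0.+1 + dsum k.-1)%N.

Definition affA (th : 'rV[R]_dd) (k : nat) (x : 'cV[R]_(l k.-1)) : 'cV[R]_(l k) :=
  bvec th k + wmat th k *m x.

Definition relu {n : nat} (x : 'cV[R]_n) : 'cV[R]_n := map_mx (fun v => Num.max v 0) x.

(* netk th k = N^{k+1,theta}_infty *)
Fixpoint netk (th : 'rV[R]_dd) (k : nat) : 'cV[R]_(l 0) -> 'cV[R]_(l k.+1) :=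
  match k with
  | 0 => affA th 1
  | k'.+1 => fun x => affA th k'.+2 (relu (netk th k' x))
  end.

(* N^{L,theta}_infty for L >= 1 (value for L = 0 is an unused convention) *)
Definition net (th : 'rV[R]_dd) (L : nat) : 'cV[R]_(l 0) -> 'cV[R]_(l L) :=
  match L return 'cV[R]_(l 0) -> 'cV[R]_(l L) with
  | 0 => fun x => x
  | L'.+1 => netk th L'
  end.

Definition sqnorm {n : nat} (v : 'cV[R]_n) : R := \sum_(i < n) v i 0 ^+ 2.

Definition tcol {n : nat} (x : n.-tuple R) : 'cV[R]_n := \col_(i < n) tnth x i.

Definition cube (n : nat) (a b : R) : set (n.-tuple R) :=
  [set x | forall i : 'I_n, a <= tnth x i <= b].

Definition loss_integrand (L : nat) (f : (l 0).-tuple R -> (l L).-tuple R)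
  (th : 'rV[R]_dd) (x : (l 0).-tuple R) : R :=
  sqnorm (net th L (tcol x) - tcol (f x)).

Definition loss (L : nat) (a b : R)
  (mu : {measure set ((l 0).-tuple R) -> \bar R})
  (f : (l 0).-tuple R -> (l L).-tuple R) (th : 'rV[R]_dd) : R :=
  Rintegral mu (cube (l 0) a b) (loss_integrand L f th).

End ANN.

From HB Require Import structures.
From mathcomp Require Import all_boot all_order all_algebra.
From mathcomp Require Import all_classical all_reals all_analysis.
From mathcomp Require Import zify ring.
Import Order.TTheory GRing.Theory Num.Theory.
Local Open Scope ring_scope.
Local Open Scope classical_set_scope.

(* All weights of layer L - 1 vanish, so that layer outputs its bias [c e_1]
   whatever the input, and layer L turns it into [xi + c' max(c, 0) e_1]: each
   of the three networks is constant.  For theta and vartheta the product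
   [c' max(c, 0)] is 0, for their midpoint it is 1/4, and expanding
   [|xi + e_1 / 4 - f|^2] produces the extra terms [(xi_1 - f_1) / 2 + 1/16]
   under the integral. *)

Lemma pcoordD (R : realType) n (t u : 'rV[R]_n) j :
  pcoord R (t + u) j = pcoord R t j + pcoord R u j.
Proof.
case: j => [|j] /=; first by rewrite addr0.
by case: insubP => [i _ _|_] /=; rewrite ?mxE ?addr0.
Qed.

Lemma pcoordZ (R : realType) n (s : R) (t : 'rV[R]_n) j :
  pcoord R (s *: t) j = s * pcoord R t j.
Proof.
case: j => [|j] /=; first by rewrite mulr0.
by case: insubP => [i _ _|_] /=; rewrite ?mxE ?mulr0.
Qed.

Lemma dsumS (l : nat -> nat) k : dsum l k.+1 = (dsum l k + l k.+1 * (l k + 1))%N.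
Proof. by rewrite /dsum big_nat_recr. Qed.

Lemma wmatE (R : realType) l dd (th : 'rV[R]_dd) k i j :
  wmat R l dd th k i j = pcoord R th (alpha l i j.+1 k).
Proof. by rewrite mxE subn1. Qed.

Lemma bvecE (R : realType) l dd (th : 'rV[R]_dd) k i :
  bvec R l dd th k i 0 = pcoord R th (alpha l (l k) i.+1 k).
Proof. by rewrite mxE. Qed.

Lemma netk_affA (R : realType) l dd (th : 'rV[R]_dd) k x :
  exists y, netk R l dd th k x = affA R l dd th k.+1 y.
Proof. by case: k => [|k]; eexists. Qed.

Lemma relu_scale_delta (R : realType) n (c : R) (i : 'I_n) :
  relu R (c *: delta_mx i 0) = Num.max c 0 *: delta_mx i 0.
Proof.
apply/matrixP => i' j; rewrite !mxE.
by case: (_ && _); rewrite ?mulr1 ?mulr0 // maxxx.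
Qed.

Lemma sqnormD_delta (R : realType) n (v : 'cV[R]_n) (i : 'I_n) (s : R) :
  sqnorm R (v + s *: delta_mx i 0) = sqnorm R v + 2 * s * v i 0 + s ^+ 2.
Proof.
rewrite /sqnorm (bigD1 i) //= [in RHS](bigD1 i) //= !mxE eqxx /=.
rewrite (eq_bigr (fun k => v k 0 ^+ 2)); last first.
  by move=> k /negbTE neki; rewrite !mxE neki /= mulr0 addr0.
rewrite mulr1; ring.
Qed.

Section LastTwoLayers.
Context {R : realType} {l : nat -> nat} (hl : forall k, (0 < l k)%N) {n : nat}.
Local Notation dd := (dsum l n.+2).
Local Notation i0 := (Ordinal (hl n.+2)).

(* For L = n + 2: [c] is the first bias of layer L - 1, [c'] the weight from
   neuron 1 of layer L - 1 to neuron 1 of layer L, [xi] the bias of layer L;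
   every other parameter vanishes. *)
Definition last_layers_param (th : 'rV[R]_dd) (c c' : R) (xi : 'cV[R]_(l n.+2)) :=
  [/\ pcoord R th (alpha l (l n.+1) 1 n.+1) = c,
      pcoord R th (alpha l 0 1 n.+2) = c',
      forall i : 'I_(l n.+2), pcoord R th (alpha l (l n.+2) i.+1 n.+2) = xi i 0
    & forall j, (1 <= j <= dd)%N -> j <> alpha l (l n.+1) 1 n.+1 ->
        j <> alpha l 0 1 n.+2 ->
        (forall k, (1 <= k <= l n.+2)%N -> j <> alpha l (l n.+2) k n.+2) ->
        pcoord R th j = 0].

Lemma last_layers_paramD (s t : R) {th vth c1 c1' c2 c2' xi1 xi2} :
  last_layers_param th c1 c1' xi1 -> last_layers_param vth c2 c2' xi2 ->
  last_layers_param (s *: th + t *: vth) (s * c1 + t * c2) (s * c1' + t * c2')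
    (s *: xi1 + t *: xi2).
Proof.
case=> Hc1 Hc1' Hxi1 Hz1 [Hc2 Hc2' Hxi2 Hz2]; split.
- by rewrite pcoordD !pcoordZ Hc1 Hc2.
- by rewrite pcoordD !pcoordZ Hc1' Hc2'.
- by move=> i; rewrite pcoordD !pcoordZ Hxi1 Hxi2 !mxE.
- by move=> j *; rewrite pcoordD !pcoordZ Hz1 // Hz2 // !mulr0 addr0.
Qed.

Context {th : 'rV[R]_dd} {c c' : R} {xi : 'cV[R]_(l n.+2)}.
Hypothesis Hth : last_layers_param th c c' xi.

Lemma wmat_penult : wmat R l dd th n.+1 = 0.
Proof.
case: Hth => _ _ _ Hzero; apply/matrixP => i j; rewrite wmatE mxE.
have Hi := ltn_ord i; have Hj : (@nat_of_ord (l n) j < l n)%N := ltn_ord j.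
have : (i.+1 * l n <= l n.+1 * l n)%N by rewrite leq_mul2r Hi orbT.
rewrite mulSn => Hm; have := hl n.+1; have := hl n.+2 => ln1 ln2.
by apply: Hzero; rewrite /alpha /= ?dsumS ?mulnDr ?muln1; try move=> k hk; lia.
Qed.

Lemma bvec_penult : bvec R l dd th n.+1 = c *: delta_mx (Ordinal (hl n.+1)) 0.
Proof.
case: Hth => Hc _ _ Hzero; apply/matrixP => i z; rewrite (ord1 z) bvecE !mxE eqxx andbT.
have [->|ne] := eqVneq i (Ordinal (hl n.+1)); first by rewrite mulr1.
rewrite -val_eqE /= in ne; have Hi := ltn_ord i.
have := hl n.+1; have := hl n.+2 => ln1 ln2.
by rewrite mulr0; apply: Hzero; rewrite /alpha /= ?dsumS ?mulnDr ?muln1; try move=> k hk; lia.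
Qed.

Lemma wmat_last : wmat R l dd th n.+2 = c' *: delta_mx i0 (Ordinal (hl n.+1)).
Proof.
case: Hth => _ Hc' _ Hzero; apply/matrixP => i j; rewrite wmatE !mxE.
have Hi := ltn_ord i; have Hj : (@nat_of_ord (l n.+1) j < l n.+1)%N := ltn_ord j.
have := hl n.+1; have := hl n.+2 => ln1 ln2.
have [->|nej] := eqVneq j (Ordinal (hl n.+1)).
  have [->|nei] := eqVneq i i0; first by rewrite mulr1.
  rewrite -val_eqE /= in nei.
  by rewrite mulr0; apply: Hzero; rewrite /alpha /= ?dsumS ?mulnDr ?muln1;
    try move=> k hk; nia.
rewrite -val_eqE /= in nej.
have : (i.+1 * l n.+1 <= l n.+2 * l n.+1)%N by rewrite leq_mul2r Hi orbT.
rewrite mulSn => Hm.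
by rewrite andbF mulr0; apply: Hzero; rewrite /alpha /= ?dsumS ?mulnDr ?muln1;
  try move=> k hk; lia.
Qed.

Lemma bvec_last : bvec R l dd th n.+2 = xi.
Proof. by case: Hth => _ _ Hxi _; apply/matrixP => i z; rewrite (ord1 z) bvecE. Qed.

Lemma net_last_layers x :
  net R l dd th n.+2 x = xi + (c' * Num.max c 0) *: delta_mx i0 0.
Proof.
rewrite /=; have [y ->] := netk_affA R l dd th n x.
rewrite /affA wmat_penult mul0mx addr0 bvec_penult relu_scale_delta bvec_last wmat_last.
by rewrite -scalemxAl -scalemxAr mul_delta_mx scalerA.
Qed.

Lemma loss_integrand_last_layers f x :
  loss_integrand R l dd n.+2 f th x =
    sqnorm R (xi - tcol R (f x))
    + 2 * (c' * Num.max c 0) * (xi i0 0 - tnth (f x) i0) + (c' * Num.max c 0) ^+ 2.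
Proof.
by rewrite /loss_integrand net_last_layers addrAC sqnormD_delta !mxE.
Qed.

Lemma loss_integrand_last_layers_inactive f :
  c' * Num.max c 0 = 0 ->
  loss_integrand R l dd n.+2 f th = fun x => sqnorm R (xi - tcol R (f x)).
Proof.
move=> s0; apply: funext => x.
by rewrite loss_integrand_last_layers s0 mulr0 mul0r expr0n /= !addr0.
Qed.

End LastTwoLayers.

Section FiniteMeasureDomain.
Context {d : measure_display} {T : measurableType d} {R : realType}.
Context {mu : {measure set T -> \bar R}} {D : set T}.
Hypotheses (mD : measurable D) (muD_fin : (mu D < +oo)%E).

Lemma integrable_cst_fin (k : R) : mu.-integrable D (EFin \o cst k).
Proof.
apply/integrableP; split; first exact/measurable_realfun.measurable_EFinP.
rewrite (_ : (fun x => `|(EFin \o cst k) x|)%E = cst `|k|%:E) //.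
by rewrite integral_cst // lte_mul_pinfty.
Qed.

Lemma integrable_addrK {g h : T -> R} :
  mu.-integrable D (EFin \o g) -> mu.-integrable D (EFin \o (g \+ h)) ->
  mu.-integrable D (EFin \o h).
Proof.
move=> ig igh; apply: (eq_integrable mD _ _ _ (integrableB mD igh ig)) => x _.
by rewrite /= -EFinB addrAC subrr add0r.
Qed.

Lemma integrable_affine_inv {u : T -> R} {s X k : R} : s != 0 ->
  mu.-integrable D (EFin \o (fun x => s * (X - u x) + k)) ->
  mu.-integrable D (EFin \o u).
Proof.
move=> s0 ih.
apply: (eq_integrable mD _ _ _
  (integrableB mD (integrable_cst_fin (X + k / s)) (integrableZl mD s^-1 ih))) => x _.
by rewrite /= -EFinD; congr EFin; field.
Qed.

Lemma Rintegral_affine (u : T -> R) (s X k : R) : mu.-integrable D (EFin \o u) ->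
  \int[mu]_(x in D) (s * (X - u x) + k) =
    s * (X * fine (mu D) - \int[mu]_(x in D) u x) + k * fine (mu D).
Proof.
move=> iu.
have iZu : mu.-integrable D (EFin \o (fun x => s * u x)).
  by apply: (eq_integrable mD _ _ _ (integrableZl mD s iu)) => x _; rewrite /= EFinM.
rewrite (@eq_Rintegral _ _ _ mu D (fun x => (s * X + k) - s * u x)); last by move=> x _; ring.
rewrite RintegralB ?Rintegral_cst ?RintegralZl //; first ring.
exact: integrable_cst_fin.
Qed.

End FiniteMeasureDomain.

Lemma measurable_cube (R : realType) n (a b : R) : measurable (cube R n a b).
Proof.
have -> : cube R n a b =
    \bigcap_(i in [set: 'I_n]) ((fun x : n.-tuple R => tnth x i) @^-1` `[a, b]).
  apply/seteqP; split => x /=.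
    by move=> H i _; rewrite /= in_itv /=; apply: H.
  by move=> H i; have := H i I; rewrite /= in_itv.
apply: fin_bigcap_measurable; first exact: finite_finset.
move=> i _; rewrite -[X in measurable X]setTI.
exact: measurable_tnth.
Qed.

Theorem proposition2p17 (R : realType) (l : nat -> nat)
  (hl : forall k, (0 < l k)%N) (L : nat) (a b : R) (hab : a < b)
  (mu : {measure set ((l 0%N).-tuple R) -> \bar R})
  (hmu : (mu (cube R (l 0%N) a b) < +oo)%E)
  (f : (l 0%N).-tuple R -> (l L).-tuple R)
  (hf : measurable_fun (cube R (l 0%N) a b) f)
  (hint : forall th : 'rV[R]_(dsum l L),
     mu.-integrable (cube R (l 0%N) a b)
       (fun x => (loss_integrand R l (dsum l L) L f th x)%:E))
  (hL : (1 < L)%N) (xi : 'cV[R]_(l L)) (th vth : 'rV[R]_(dsum l L))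
  (Hth1 : pcoord R th (alpha l (l L.-1) 1 L.-1) = 1)
  (Hvth1 : pcoord R vth (alpha l 0 1 L) = 1)
  (Hxi : forall i : 'I_(l L),
     pcoord R th (alpha l (l L) i.+1 L) = xi i 0 /\
     pcoord R vth (alpha l (l L) i.+1 L) = xi i 0)
  (Hth0 : pcoord R th (alpha l 0 1 L) = 0)
  (Hvth0 : pcoord R vth (alpha l (l L.-1) 1 L.-1) = 0)
  (Hzero : forall j : nat, (1 <= j <= dsum l L)%N ->
     j <> alpha l (l L.-1) 1 L.-1 -> j <> alpha l 0 1 L ->
     (forall k : nat, (1 <= k <= l L)%N -> j <> alpha l (l L) k L) ->
     pcoord R th j = 0 /\ pcoord R vth j = 0) :
  let m := fine (mu (cube R (l 0%N) a b)) in
  let Loss := loss R l (dsum l L) L a b mu f in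
  Loss th = Loss vth /\
  Loss (2^-1 *: (th + vth)) =
    (Loss th + Loss vth) / 2 + m / 16
    + 2^-1 * (xi (Ordinal (hl L)) 0 * m
              - Rintegral mu (cube R (l 0%N) a b) (fun x => tnth (f x) (Ordinal (hl L)))).
Proof.
destruct L as [|[|n]] => //.
move=> m Loss; set D := cube R (l 0%N) a b; set i0 := Ordinal (hl n.+2).
have mD : measurable D := measurable_cube R (l 0%N) a b.
have Pth : last_layers_param th 1 0 xi.
  by split=> // [i | j j1 j2 j3 j4]; [exact: (Hxi i).1 | exact: (Hzero j j1 j2 j3 j4).1].
have Pvth : last_layers_param vth 0 1 xi.
  by split=> // [i | j j1 j2 j3 j4]; [exact: (Hxi i).2 | exact: (Hzero j j1 j2 j3 j4).2].
have Pmid : last_layers_param (2^-1 *: (th + vth)) 2^-1 2^-1 xi.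
  have half2 : 2^-1 + 2^-1 = 1 :> R by field.
  have := last_layers_paramD (2^-1) (2^-1) Pth Pvth.
  by rewrite scalerDr mulr1 mulr0 addr0 add0r -scalerDl half2 scale1r.
pose g0 x := sqnorm R (xi - tcol R (f x)).
pose u x := tnth (f x) i0.
pose h x := 2^-1 * (xi i0 0 - u x) + 16^-1.
have Eth : loss_integrand R l _ n.+2 f th = g0 :=
  loss_integrand_last_layers_inactive hl Pth f (mul0r _).
have Evth : loss_integrand R l _ n.+2 f vth = g0.
  by apply: (loss_integrand_last_layers_inactive hl Pvth); rewrite maxxx mulr0.
have Emid : loss_integrand R l _ n.+2 f (2^-1 *: (th + vth)) = g0 \+ h.
  apply: funext => x; rewrite (loss_integrand_last_layers hl Pmid).
  rewrite (max_idPl (_ : 0 <= 2^-1)) ?invr_ge0 ?ler0n // -addrA /h /u /i0.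
  by congr (_ + _); field.
have ig0 : mu.-integrable D (EFin \o g0) by rewrite -Eth; apply: hint.
have ih : mu.-integrable D (EFin \o h).
  by apply: (integrable_addrK mD ig0); rewrite -Emid; apply: hint.
have iu : mu.-integrable D (EFin \o u).
  by apply: (integrable_affine_inv mD hmu _ ih); rewrite invr_eq0 pnatr_eq0.
split; first by rewrite /Loss /loss Eth Evth.
by rewrite /Loss /loss Emid Eth Evth RintegralD // /h Rintegral_affine // -/m; field.
Qed.
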